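(* Let $N$ be a simply connected $2$-step nilpotent Lie group with Lie algebra $\mathfrak n$ and a left-invariant pseudo-Riemannian metric $\langle\cdot,\cdot\rangle$ whose center $\mathfrak z$ is nondegenerate, and suppose $(N,\langle\cdot,\cdot\rangle)$ is of pseudo$H$-type. Then $(N,\langle\cdot,\cdot\rangle)$ has a nontrivial nilsoliton, i.e. there exist $c\in\mathbb R$ and a derivation $D$ of $\mathfrak n$ with $\mathrm{Ric}=c\cdot\mathrm{Id}+D$.
   Context: For $y\in\mathfrak n$ define $J_y:\mathfrak n\to\mathfrak n$ by $\langle J_y x,w\rangle=\langle y,[x,w]\rangle$ for all $x,w\in\mathfrak n$. With nondegenerate center $\mathfrak z$ put $\mathfrak v=\mathfrak z^{\perp}$, so $\mathfrak n=\mathfrak z\oplus\mathfrak v$ and $J_z$ preserves $\mathfrak v$ for $z\in\mathfrak z$. The group is of pseudo$H$-type if $J_z^2=\langle z,z\rangle I$ on $\mathfrak v$ for all $z\in\mathfrak z$. $\mathrm{Ric}$ denotes the Ricci operator of the left-invariant metric, i.e. the endomorphism of $\mathfrak n$ with $\langle \mathrm{Ric}\,x,y\rangle=\varrho(x,y)$, $\varrho$ the Ricci tensor. A left-invariant metric is an algebraic Ricci soliton (on a nilpotent group: a nilsoliton) if $\mathrm{Ric}=c\cdot\mathrm{Id}+D$ for some $c\in\mathbb R$ and some derivation $D$ of $\mathfrak n$ (i.e. $D[X,Y]=[DX,Y]+[X,DY]$). The paper uses ''nontrivial'' without further definition; here $N$ is non-abelian. *)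

(* A finite-dimensional real Lie algebra n = R^m is modelled
   on row vectors 'rV[R]_m, with a bracket given as a function and a
   left-invariant pseudo-Riemannian metric given by a symmetric invertible
   Gram matrix G: <x,y> = x G y^T. *)
From HB Require Import structures.
From mathcomp Require Import all_boot all_order all_algebra.
From mathcomp Require Import reals.
Set Implicit Arguments. Unset Strict Implicit. Unset Printing Implicit Defensive.
Import Order.TTheory GRing.Theory Num.Theory.
Local Open Scope ring_scope.

Section Defs.
Variables (R : realType) (m : nat).
Notation V := 'rV[R]_m.

Definition ip (G : 'M[R]_m) (x y : V) : R := (x *m G *m y^T) 0 0.

Definition ev (j : 'I_m) : V := delta_mx 0 j.

Definition is_lie_bracket (br : V -> V -> V) : Prop :=
  [/\ (forall (a : R) (x y w : V), br (a *: x + y) w = a *: br x w + br y w),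
      (forall (a : R) (x y w : V), br w (a *: x + y) = a *: br w x + br w y),
      (forall x : V, br x x = 0) &
      (forall x y w : V, br x (br y w) + br y (br w x) + br w (br x y) = 0)].

Definition two_step_nilpotent (br : V -> V -> V) : Prop :=
  (forall x y w : V, br (br x y) w = 0) /\ (exists x y : V, br x y != 0).

Definition pseudo_metric (G : 'M[R]_m) : Prop := G^T = G /\ G \in unitmx.

Definition in_center (br : V -> V -> V) (z : V) : Prop := forall y : V, br z y = 0.

Definition center_nondegenerate (br : V -> V -> V) (G : 'M[R]_m) : Prop :=
  forall z : V, in_center br z ->
    (forall z' : V, in_center br z' -> ip G z z' = 0) -> z = 0.

Definition in_v (br : V -> V -> V) (G : 'M[R]_m) (x : V) : Prop :=
  forall z : V, in_center br z -> ip G z x = 0.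

(* J_y x, defined by <J_y x, w> = <y, [x, w]> for all w *)
Definition Jop (br : V -> V -> V) (G : 'M[R]_m) (y x : V) : V :=
  (\row_j ip G y (br x (ev j))) *m invmx G.

Definition pseudoH_type (br : V -> V -> V) (G : 'M[R]_m) : Prop :=
  forall z : V, in_center br z ->
    forall x : V, in_v br G x -> Jop br G z (Jop br G z x) = ip G z z *: x.

(* Levi-Civita connection of the left-invariant metric (Koszul formula):
   2 <nabla_x y, w> = <[x,y],w> - <[y,w],x> + <[w,x],y> *)
Definition nabla (br : V -> V -> V) (G : 'M[R]_m) (x y : V) : V :=
  2^-1 *: ((\row_j (ip G (br x y) (ev j) - ip G (br y (ev j)) x
                    + ip G (br (ev j) x) y)) *m invmx G).

Definition curv (br : V -> V -> V) (G : 'M[R]_m) (x y w : V) : V :=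
  nabla br G x (nabla br G y w) - nabla br G y (nabla br G x w)
  - nabla br G (br x y) w.

Definition ricci_tensor (br : V -> V -> V) (G : 'M[R]_m) (y w : V) : R :=
  \sum_(i < m) (curv br G (ev i) y w) 0 i.

(* Ricci operator (acting on row vectors x |-> x *m Ric):
   <Ric x, y> = rho(x, y) *)
Definition ricci_op (br : V -> V -> V) (G : 'M[R]_m) : 'M[R]_m :=
  (\matrix_(i, j) ricci_tensor br G (ev i) (ev j)) *m invmx G.

Definition is_derivation (br : V -> V -> V) (D : 'M[R]_m) : Prop :=
  forall x y : V, br x y *m D = br (x *m D) y + br x (y *m D).

End Defs.

(* Let P be the G-orthogonal projection onto the center z and Q = 1 - P the one
   onto v. In a 2-step nilpotent algebra, ad_a maps n into z and kills z, J_a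
   maps n into v and kills z, and K_a : x |-> J_x a maps z into v and kills v.
   Writing nabla with the Koszul formula, these support conditions kill all
   but three traces in the Ricci tensor:
     rho(y, w) = (tr(ad_w K_y) + tr(ad_y K_w) - tr(J_w J_y)) / 4.
   In pseudo H-type, polarizing J_z^2 = <z,z> on v gives
   J_a J_b + J_b J_a = 2 <Pa, Pb> Q. Hence tr(J_w J_y) = <Pw, Py> tr Q and,
   summing over a basis (e_j) and its dual basis (e_j^* ),
   sum_j J_(e_j) J_(e_j^* ) = (tr P) Q, so that
     Ric = (tr P / 2) Q - (tr Q / 4) P.
   Since 1 + P (identity on v, twice the identity on z) is a derivation,
   Ric is a scalar plus a derivation. *)

From mathcomp Require Import all_boot all_order all_algebra.
From mathcomp Require Import reals.
From HB Require Import structures.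
From mathcomp Require Import ring lra.
Set Implicit Arguments. Unset Strict Implicit. Unset Printing Implicit Defensive.
Import GRing.Theory Num.Theory.
Local Open Scope ring_scope.

Section LinearFunctions.
Variables (R : pzRingType) (U W : lmodType R) (f : U -> W).
Hypothesis f_lin : linear f.

Let F : {linear U -> W} := HB.pack f (GRing.isLinear.Build _ _ _ _ f f_lin).

Lemma linD x y : f (x + y) = f x + f y. Proof. exact: (linearD F). Qed.
Lemma linZ a x : f (a *: x) = a *: f x. Proof. exact: (linearZ_LR F). Qed.
Lemma linB x y : f (x - y) = f x - f y. Proof. exact: (linearB F). Qed.
Lemma lin_sum (I : finType) (c : I -> R) (v : I -> U) :
  f (\sum_i c i *: v i) = \sum_i c i *: f (v i).
Proof.
rewrite [LHS](linear_sum F); apply: eq_bigr => i _; exact: (linearZ_LR F).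
Qed.

End LinearFunctions.

Lemma mul_rV_lin1_fun (R : pzRingType) m n (f : 'rV[R]_m -> 'rV[R]_n) :
  linear f -> forall x, x *m lin1_mx f = f x.
Proof.
move=> f_lin; exact: (mul_rV_lin1 (HB.pack f (GRing.isLinear.Build _ _ _ _ f f_lin))).
Qed.

Lemma mx_ext (R : pzRingType) m n (A B : 'M[R]_(m, n)) :
  (forall x : 'rV_m, x *m A = x *m B) -> A = B.
Proof. by move=> AB; apply/row_matrixP => i; rewrite !rowE AB. Qed.

Lemma mxtrace_mul_proj0l (R : pzRingType) n (A B P : 'M[R]_n) :
  A *m P = A -> P *m B = 0 -> \tr (A *m B) = 0.
Proof. by move=> <- PB; rewrite -mulmxA PB mulmx0 mxtrace0. Qed.

Lemma mxtrace_mul_proj0r (R : pzRingType) n (A B P : 'M[R]_n) :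
  A *m P = 0 -> P *m B = B -> \tr (A *m B) = 0.
Proof. by move=> AP <-; rewrite mulmxA AP mul0mx mxtrace0. Qed.

Lemma mxtraceB (R : pzRingType) n (A B : 'M[R]_n) : \tr (A - B) = \tr A - \tr B.
Proof. exact: raddfB. Qed.

Lemma scale_projs_grading (R : comPzRingType) n (P : 'M[R]_n) (a b : R) :
  a *: (1%:M - P) - b *: P = (2 * a + b)%:M - (a + b) *: (1%:M + P).
Proof. by apply/matrixP => i j; rewrite !mxE; ring. Qed.

Section Metric.
Variables (R : realType) (m : nat) (G : 'M[R]_m).
Hypothesis G_metric : pseudo_metric G.
Local Notation V := 'rV[R]_m.
Local Notation ip := (ip G).

Let G_sym : G^T = G. Proof. by case: G_metric. Qed.
Let G_unit : G \in unitmx. Proof. by case: G_metric. Qed.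

Lemma trmx_invG : (invmx G)^T = invmx G.
Proof. by rewrite trmx_inv G_sym. Qed.

Lemma ipDl x y t : ip (x + y) t = ip x t + ip y t.
Proof. by rewrite /ip !mulmxDl mxE. Qed.
Lemma ipZl a x t : ip (a *: x) t = a * ip x t.
Proof. by rewrite /ip -!scalemxAl mxE. Qed.
Lemma ipNl x t : ip (- x) t = - ip x t.
Proof. by rewrite -scaleN1r ipZl mulN1r. Qed.
Lemma ipBl x y t : ip (x - y) t = ip x t - ip y t.
Proof. by rewrite ipDl ipNl. Qed.
Lemma ip0l t : ip 0 t = 0.
Proof. by rewrite /ip !mul0mx mxE. Qed.
Lemma ip_suml (I : finType) (v : I -> V) t : ip (\sum_i v i) t = \sum_i ip (v i) t.
Proof.
by apply: (big_rec2 (fun s u => ip s t = u)) => [|i s u _ <-]; rewrite ?ip0l ?ipDl.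
Qed.

Lemma ipDr x y t : ip t (x + y) = ip t x + ip t y.
Proof. by rewrite /ip linearD mulmxDr mxE. Qed.
Lemma ipZr a x t : ip t (a *: x) = a * ip t x.
Proof. by rewrite /ip linearZ -scalemxAr mxE. Qed.
Lemma ipNr x t : ip t (- x) = - ip t x.
Proof. by rewrite -scaleN1r ipZr mulN1r. Qed.
Lemma ipBr x y t : ip t (x - y) = ip t x - ip t y.
Proof. by rewrite ipDr ipNr. Qed.
Lemma ip0r t : ip t 0 = 0.
Proof. by rewrite /ip trmx0 !mulmx0 mxE. Qed.
Lemma ip_sumr (I : finType) (v : I -> V) t : ip t (\sum_i v i) = \sum_i ip t (v i).
Proof.
by apply: (big_rec2 (fun s u => ip t s = u)) => [|i s u _ <-]; rewrite ?ip0r ?ipDr.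
Qed.

Lemma ipC x y : ip x y = ip y x.
Proof.
have tr11 (A : 'M[R]_1) : A 0 0 = A^T 0 0 by rewrite mxE.
by rewrite /ip [RHS]tr11 !trmx_mul trmxK G_sym mulmxA.
Qed.

Lemma ip_delta x j : ip x 'e_j = (x *m G) 0 j.
Proof. by rewrite /ip trmx_delta -colE !mxE. Qed.

Lemma ip_lin_expand (f : V -> V) a t : linear f ->
  ip a (f t) = \sum_j t 0 j * ip a (f 'e_j).
Proof.
move=> f_lin; rewrite {1}(row_sum_delta t) lin_sum // ip_sumr.
by apply: eq_bigr => j _; exact: ipZr.
Qed.

Lemma ip_mulVmx (r x : V) : ip (r *m invmx G) x = \sum_j r 0 j * x 0 j.
Proof. by rewrite /ip mulmxKV // mxE; apply: eq_bigr => j _; rewrite !mxE. Qed.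

Lemma ip_dual x j : ip x ('e_j *m invmx G) = x 0 j.
Proof.
by rewrite /ip trmx_mul trmx_invG trmx_delta mulmxA mulmxK // -colE !mxE.
Qed.

Lemma ip_inj x y : (forall t, ip x t = ip y t) -> x = y.
Proof.
move=> xy; suff : x *m G = y *m G by move/(congr1 (mulmx^~ (invmx G))); rewrite !mulmxK.
by apply/rowP => j; rewrite -!ip_delta xy.
Qed.

Lemma mxtrace_skew (A : 'M[R]_m) : (A *m G)^T = - (A *m G) -> \tr A = 0.
Proof.
move=> AG_skew; have : \tr A = - \tr A.
  rewrite -{1}(mulmxK G_unit A) -[LHS]mxtrace_tr trmx_mul AG_skew trmx_invG.
  by rewrite mulmxN raddfN /= mxtrace_mulC mulmxK.
by move/eqP; rewrite -subr_eq0 opprK -mulr2n mulrn_eq0 /= => /eqP.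
Qed.

End Metric.

Section LieAlgebra.
Variables (R : realType) (m : nat) (br : 'rV[R]_m -> 'rV[R]_m -> 'rV[R]_m).
Variable G : 'M[R]_m.
Hypotheses (br_lie : is_lie_bracket br) (G_metric : pseudo_metric G).
Local Notation V := 'rV[R]_m.
Local Notation ip := (ip G).
Local Notation J := (Jop br G).

Lemma br_linl w : linear (br^~ w).
Proof. by case: br_lie => linl _ _ _ a x y; exact: linl. Qed.
Lemma br_linr w : linear (br w).
Proof. by case: br_lie => _ linr _ _ a x y; exact: linr. Qed.

Lemma br_skew x y : br x y = - br y x.
Proof.
case: br_lie => _ _ brxx _; apply/eqP; rewrite -addr_eq0; apply/eqP.
have := brxx (x + y); rewrite (linD (br_linl _)) !(linD (br_linr _)).
by rewrite !brxx add0r addr0.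
Qed.

Lemma ip_Jop y x t : ip (J y x) t = ip y (br x t).
Proof.
rewrite /Jop (ip_mulVmx G_metric) [in RHS](row_sum_delta t) (lin_sum (br_linr x)).
rewrite ip_sumr; apply: eq_bigr => j _; by rewrite mxE ipZr mulrC.
Qed.

Lemma Jop_linl x : linear (J^~ x).
Proof.
move=> a y y'; apply: (ip_inj G_metric) => t.
by rewrite ipDl ipZl !ip_Jop ipDl ipZl.
Qed.
Lemma Jop_linr y : linear (J y).
Proof.
move=> a x x'; apply: (ip_inj G_metric) => t.
by rewrite ipDl ipZl !ip_Jop (br_linl t) ipDr ipZr.
Qed.

Lemma nablaE x y : nabla br G x y = 2^-1 *: (br x y - J x y - J y x).
Proof.
congr (_ *: _); apply: (ip_inj G_metric) => t.
have id_lin : linear (@id V) by [].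
rewrite (ip_mulVmx G_metric) !ipBl !ip_Jop (ip_lin_expand _ _ _ id_lin).
rewrite !(ip_lin_expand _ _ _ (br_linr _)) -!sumrB; apply: eq_bigr => j _.
rewrite !mxE [ip (br y _) x](ipC G_metric) [br _ x]br_skew ipNl.
rewrite [ip (br x _) y](ipC G_metric).
ring.
Qed.

End LieAlgebra.

Section TwoStep.
Variables (R : realType) (m : nat) (br : 'rV[R]_m -> 'rV[R]_m -> 'rV[R]_m).
Variable G : 'M[R]_m.
Hypotheses (br_lie : is_lie_bracket br) (G_metric : pseudo_metric G).
Hypotheses (br_2step : two_step_nilpotent br) (center_nondeg : center_nondegenerate br G).
Local Notation V := 'rV[R]_m.
Local Notation ip := (ip G).
Local Notation J := (Jop br G).

Lemma in_center_br x y : in_center br (br x y).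
Proof. by case: br_2step => brbr _ w; exact: brbr. Qed.

Lemma br_center_r c x : in_center br c -> br x c = 0.
Proof. by move=> cc; rewrite (br_skew br_lie) cc oppr0. Qed.

Lemma in_centerB c d : in_center br c -> in_center br d -> in_center br (c - d).
Proof. by move=> cc cd y; rewrite (linB (br_linl br_lie y)) cc cd subrr. Qed.

Definition center_mx : 'M[R]_(m, m * m) :=
  lin1_mx (fun z => mxvec (\matrix_(j, k) br z 'e_j 0 k)).

Lemma in_center_mx z : in_center br z <-> z *m center_mx = 0.
Proof.
have lin : linear (fun z : V => mxvec (\matrix_(j, k) br z 'e_j 0 k)).
  move=> a x y; rewrite -linearZ -linearD /=; congr mxvec.
  by apply/matrixP => j k; rewrite !mxE (br_linl br_lie) !mxE.
rewrite /center_mx mul_rV_lin1_fun //; split=> [cz | /eqP z0 y].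
  by apply/eqP; rewrite mxvec_eq0; apply/eqP/matrixP => j k; rewrite !mxE cz mxE.
move: z0; rewrite mxvec_eq0 => /eqP z0.
rewrite (row_sum_delta y) (lin_sum (br_linr br_lie z)).
apply: big1 => j _; apply/rowP => k; move/matrixP: z0 => /(_ j k).
by rewrite !mxE => ->; rewrite mulr0.
Qed.

Fact zbase_key : unit. Proof. by []. Qed.
Definition zbase := locked_with zbase_key (row_base (kermx center_mx)).

Lemma in_centerP z : in_center br z <-> (z <= zbase)%MS.
Proof.
by rewrite in_center_mx /zbase locked_withE eq_row_base sub_kermx; split=> [->|/eqP].
Qed.

Lemma in_center_mul_zbase y : in_center br (y *m zbase).
Proof. by apply/in_centerP; exact: submxMl. Qed.

Definition zgram := zbase *m G *m zbase^T.

Lemma ip_zbase u v : ip (u *m zbase) (v *m zbase) = (u *m zgram *m v^T) 0 0.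
Proof. by rewrite /ip /zgram trmx_mul !mulmxA. Qed.

Lemma zgram_unit : zgram \in unitmx.
Proof.
rewrite -row_free_unit; apply: inj_row_free => u u0.
have zbase_free : row_free zbase by rewrite /zbase locked_withE row_base_free.
apply: (row_free_inj zbase_free); rewrite /= mul0mx.
apply: center_nondeg; first exact: in_center_mul_zbase.
by move=> c /in_centerP /submxP [v ->]; rewrite ip_zbase u0 mul0mx mxE.
Qed.

Definition projz := G *m zbase^T *m invmx zgram *m zbase.
Definition projv := 1%:M - projz.

Lemma projvE (x : V) : x *m projv = x - x *m projz.
Proof. by rewrite mulmxBr mulmx1. Qed.

Lemma projzv (x : V) : x *m projz + x *m projv = x.
Proof. by rewrite projvE addrC subrK. Qed.

Lemma in_center_projz (x : V) : in_center br (x *m projz).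
Proof. by rewrite /projz mulmxA; exact: in_center_mul_zbase. Qed.

Lemma ip_projv_center x c : in_center br c -> ip (x *m projv) c = 0.
Proof.
move=> /in_centerP /submxP [y ->]; rewrite projvE ipBl /projz mulmxA ip_zbase.
rewrite !mulmxA -(mulmxA _ zbase) -(mulmxA _ (zbase *m G)) -/zgram.
by rewrite mulmxKV ?zgram_unit // /ip trmx_mul !mulmxA subrr.
Qed.

Lemma projz_center c : in_center br c -> c *m projz = c.
Proof.
move=> cc; apply/eqP; rewrite eq_sym -subr_eq0 -projvE; apply/eqP.
apply: center_nondeg => [|c' cc']; last exact: ip_projv_center.
by rewrite projvE; apply: in_centerB => //; exact: in_center_projz.
Qed.

Lemma projz_ortho t : (forall c, in_center br c -> ip t c = 0) -> t *m projz = 0.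
Proof.
move=> tz; apply: center_nondeg => [|c cc]; first exact: in_center_projz.
have := ip_projv_center t cc; rewrite projvE ipBl tz // sub0r.
by move/eqP; rewrite oppr_eq0 => /eqP.
Qed.

Lemma projz_idem (x : V) : x *m projz *m projz = x *m projz.
Proof. exact/projz_center/in_center_projz. Qed.

Lemma ip_projz_sym x t : ip (x *m projz) t = ip x (t *m projz).
Proof.
rewrite -{1}(projzv t) -{2}(projzv x) ipDr ipDl.
by rewrite [ip (x *m projz) (t *m projv)](ipC G_metric) !ip_projv_center
  ?addr0 ?add0r //; exact: in_center_projz.
Qed.

Lemma ip_projv_sym x t : ip (x *m projv) t = ip x (t *m projv).
Proof. by rewrite !projvE ipBl ipBr ip_projz_sym. Qed.

(* Keyed locking stops rewrite from unfolding these matrices while matching. *)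
Fact admx_key : unit. Proof. by []. Qed.
Fact Jmx_key : unit. Proof. by []. Qed.
Fact Kmx_key : unit. Proof. by []. Qed.
Definition admx a := locked_with admx_key (lin1_mx (br^~ a)).
Definition Jmx a := locked_with Jmx_key (lin1_mx (J a)).
Definition Kmx a := locked_with Kmx_key (lin1_mx (J^~ a)).

Lemma admxE a x : x *m admx a = br x a.
Proof. by rewrite /admx locked_withE; exact/mul_rV_lin1_fun/br_linl. Qed.
Lemma JmxE a x : x *m Jmx a = J a x.
Proof.
by rewrite /Jmx locked_withE; exact/mul_rV_lin1_fun/(Jop_linr br_lie G_metric).
Qed.
Lemma KmxE a x : x *m Kmx a = J x a.
Proof.
by rewrite /Kmx locked_withE; exact/mul_rV_lin1_fun/(Jop_linl br_lie G_metric).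
Qed.

Lemma Jop_ortho_center b x : (forall c, in_center br c -> ip b c = 0) -> J b x = 0.
Proof.
move=> bz; apply: (ip_inj G_metric) => t.
by rewrite (ip_Jop br_lie G_metric) ip0l bz //; exact: in_center_br.
Qed.

Lemma ip_Jop_center a x c : in_center br c -> ip (J a x) c = 0.
Proof. by move=> cc; rewrite (ip_Jop br_lie G_metric) br_center_r // ip0r. Qed.

Lemma admx_projz a : admx a *m projz = admx a.
Proof.
by apply: mx_ext => x; rewrite mulmxA !admxE projz_center //; exact: in_center_br.
Qed.
Lemma projz_admx a : projz *m admx a = 0.
Proof. by apply: mx_ext => x; rewrite mulmxA admxE in_center_projz mulmx0. Qed.

Lemma Jmx_projz a : Jmx a *m projz = 0.
Proof.
apply: mx_ext => x; rewrite mulmxA JmxE mulmx0; apply: projz_ortho => c.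
exact: ip_Jop_center.
Qed.
Lemma projz_Jmx a : projz *m Jmx a = 0.
Proof.
apply: mx_ext => x; rewrite mulmxA JmxE mulmx0; apply: (ip_inj G_metric) => t.
by rewrite (ip_Jop br_lie G_metric) ip0l in_center_projz ip0r.
Qed.

Lemma Kmx_projz a : Kmx a *m projz = 0.
Proof.
apply: mx_ext => x; rewrite mulmxA KmxE mulmx0; apply: projz_ortho => c.
exact: ip_Jop_center.
Qed.
Lemma projz_Kmx a : projz *m Kmx a = Kmx a.
Proof.
apply: mx_ext => x; rewrite mulmxA !KmxE -{2}(projzv x).
rewrite (linD (Jop_linl br_lie G_metric a)) [J (x *m projv) a]Jop_ortho_center ?addr0 //.
by move=> c; exact: ip_projv_center.
Qed.

Lemma Jmx_projzE a : Jmx a = Jmx (a *m projz).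
Proof.
apply: mx_ext => x; rewrite !JmxE -{1}(projzv a).
rewrite (linD (Jop_linl br_lie G_metric x)) [J (a *m projv) x]Jop_ortho_center ?addr0 //.
by move=> c; exact: ip_projv_center.
Qed.

Lemma mxtrace_Jmx a : \tr (Jmx a) = 0.
Proof.
apply: (mxtrace_skew G_metric); apply/matrixP => k l.
have JG_br i j : (Jmx a *m G) i j = ip a (br 'e_i 'e_j).
  by rewrite -(ip_Jop br_lie G_metric) ip_delta -JmxE -rowE -row_mul [RHS]mxE.
by rewrite mxE [RHS]mxE !JG_br (br_skew br_lie) ipNr.
Qed.

Lemma mxtrace_admx a : \tr (admx a) = 0.
Proof. by rewrite -admx_projz mxtrace_mulC projz_admx mxtrace0. Qed.
Lemma mxtrace_Kmx a : \tr (Kmx a) = 0.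
Proof. by rewrite -projz_Kmx mxtrace_mulC Kmx_projz mxtrace0. Qed.

Lemma mxtrace_admx_admx a b : \tr (admx a *m admx b) = 0.
Proof. exact: (mxtrace_mul_proj0l (admx_projz a) (projz_admx b)). Qed.
Lemma mxtrace_admx_Jmx a b : \tr (admx a *m Jmx b) = 0.
Proof. exact: (mxtrace_mul_proj0l (admx_projz a) (projz_Jmx b)). Qed.
Lemma mxtrace_Jmx_Kmx a b : \tr (Jmx a *m Kmx b) = 0.
Proof. exact: (mxtrace_mul_proj0r (Jmx_projz a) (projz_Kmx b)). Qed.
Lemma mxtrace_Kmx_Kmx a b : \tr (Kmx a *m Kmx b) = 0.
Proof. exact: (mxtrace_mul_proj0r (Kmx_projz a) (projz_Kmx b)). Qed.

Definition nablamx a := 2^-1 *: (admx a - Kmx a - Jmx a).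
Definition nabla_dirmx a := - 2^-1 *: (admx a + Jmx a + Kmx a).

Lemma nablamxE a x : x *m nablamx a = nabla br G x a.
Proof.
by rewrite -scalemxAr !mulmxBr admxE KmxE JmxE (nablaE br_lie G_metric).
Qed.

Lemma nabla_dirmxE a x : x *m nabla_dirmx a = nabla br G a x.
Proof.
rewrite -scalemxAr !mulmxDr admxE KmxE JmxE (nablaE br_lie G_metric).
by rewrite scaleNr -scalerN !opprD [br x a](br_skew br_lie) opprK.
Qed.

Lemma curv_mx x y w : curv br G x y w =
  x *m (nablamx (nabla br G y w) - nablamx w *m nabla_dirmx y - admx y *m nablamx w).
Proof. by rewrite /curv !mulmxBr !mulmxA !nablamxE nabla_dirmxE admxE. Qed.

Lemma ricci_tensor_mx y w : ricci_tensor br G y w =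
  \tr (nablamx (nabla br G y w) - nablamx w *m nabla_dirmx y - admx y *m nablamx w).
Proof.
by rewrite /ricci_tensor /mxtrace; apply: eq_bigr => i _; rewrite curv_mx -rowE mxE.
Qed.

Lemma ricci_tensor_2step y w : ricci_tensor br G y w =
  4^-1 * (\tr (admx w *m Kmx y) + \tr (admx y *m Kmx w) - \tr (Jmx w *m Jmx y)).
Proof.
have tr_nabla a : \tr (nablamx a) = 0.
  by rewrite mxtraceZ !mxtraceB mxtrace_admx mxtrace_Kmx mxtrace_Jmx !subr0 mulr0.
have tr_nabla_nabla_dir : \tr (nablamx w *m nabla_dirmx y) =
    - 4^-1 * (\tr (admx w *m Kmx y) - \tr (admx y *m Kmx w) - \tr (Jmx w *m Jmx y)).
  rewrite -scalemxAl -scalemxAr scalerA mxtraceZ !mulmxBl !mulmxDr !mxtraceB !mxtraceD.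
  rewrite !mxtrace_admx_admx !mxtrace_admx_Jmx !mxtrace_Kmx_Kmx !mxtrace_Jmx_Kmx.
  rewrite (mxtrace_mulC (Kmx w) (Jmx y)) (mxtrace_mulC (Jmx w) (admx y)).
  rewrite (mxtrace_mulC (Kmx w) (admx y)) mxtrace_Jmx_Kmx mxtrace_admx_Jmx.
  lra.
have tr_ad_nabla : \tr (admx y *m nablamx w) = - 2^-1 * \tr (admx y *m Kmx w).
  rewrite -scalemxAr mxtraceZ !mulmxBr !mxtraceB mxtrace_admx_admx mxtrace_admx_Jmx.
  ring.
rewrite ricci_tensor_mx !mxtraceB tr_nabla tr_nabla_nabla_dir tr_ad_nabla.
lra.
Qed.

Lemma is_derivation_grading a : is_derivation br (a *: (1%:M + projz)).
Proof.
have D_mul v : v *m (a *: (1%:M + projz)) = a *: (v + v *m projz).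
  by rewrite -scalemxAr mulmxDr mulmx1.
move=> x y; rewrite !D_mul projz_center; last exact: in_center_br.
rewrite (linZ (br_linl br_lie y)) (linZ (br_linr br_lie x)).
rewrite (linD (br_linl br_lie y)) (linD (br_linr br_lie x)).
by rewrite (in_center_projz x y) (br_center_r x (in_center_projz y)) !addr0 -scalerDr.
Qed.

Hypothesis pseudoH : pseudoH_type br G.

Lemma Jmx_lin : linear Jmx.
Proof.
move=> c a b; apply: mx_ext => x.
by rewrite mulmxDr -scalemxAr !JmxE (Jop_linl br_lie G_metric).
Qed.

Lemma Jmx_sqr_center z : in_center br z -> Jmx z *m Jmx z = ip z z *: projv.
Proof.
move=> cz; apply: mx_ext => x; rewrite mulmxA !JmxE -scalemxAr.
rewrite -{1}(projzv x) (linD (Jop_linr br_lie G_metric z)) -(JmxE z (x *m projz)).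
rewrite -mulmxA projz_Jmx mulmx0 add0r pseudoH // => c cc.
by rewrite (ipC G_metric); exact: ip_projv_center.
Qed.

Lemma Jmx_sqr a : Jmx a *m Jmx a = ip (a *m projz) (a *m projz) *: projv.
Proof. by rewrite Jmx_projzE Jmx_sqr_center //; exact: in_center_projz. Qed.

Lemma Jmx_anticomm a b :
  Jmx a *m Jmx b + Jmx b *m Jmx a = (2 * ip (a *m projz) (b *m projz)) *: projv.
Proof.
set qa := ip (a *m projz) (a *m projz); set qb := ip (b *m projz) (b *m projz).
have := Jmx_sqr (a + b); rewrite (linD Jmx_lin) mulmxDl !mulmxDr !Jmx_sqr -/qa -/qb.
rewrite !mulmxDl ipDl !ipDr [ip (b *m projz) (a *m projz)](ipC G_metric) => sqr_ab.
apply: (addrI (qa *: projv)); apply: (addIr (qb *: projv)).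
rewrite !addrA -[_ + Jmx b *m Jmx a + _]addrA sqr_ab -!scalerDl.
by congr (_ *: _); rewrite /qa /qb; ring.
Qed.

Lemma mxtrace_Jmx_Jmx y w :
  \tr (Jmx w *m Jmx y) = ip (w *m projz) (y *m projz) * \tr projv.
Proof.
apply: (@mulfI _ 2); first by rewrite pnatr_eq0.
rewrite mulr2n mulrDl mul1r -{2}(mxtrace_mulC (Jmx y)) -mxtraceD Jmx_anticomm.
by rewrite mxtraceZ mulrA.
Qed.

Lemma dual_delta j : ('e_j : V) *m invmx G = \sum_k invmx G j k *: 'e_k.
Proof.
by rewrite {1}(row_sum_delta ('e_j *m _)); apply: eq_bigr => k _; rewrite -rowE mxE.
Qed.

Definition Jsum := \sum_j Jmx 'e_j *m Jmx (('e_j : V) *m invmx G).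

Lemma mxtrace_admx_Kmx w y : \tr (admx w *m Kmx y) = ip (y *m Jsum) w.
Proof.
rewrite mxtrace_mulC /mxtrace mulmx_sumr ip_suml; apply: eq_bigr => j _.
have -> : (Kmx y *m admx w) j j = (('e_j : V) *m (Kmx y *m admx w)) 0 j.
  by rewrite -rowE [RHS]mxE.
rewrite mulmxA KmxE admxE !mulmxA !JmxE (ip_Jop br_lie G_metric).
by rewrite (ipC G_metric) ip_dual.
Qed.

Lemma Jsum_swap : \sum_j Jmx (('e_j : V) *m invmx G) *m Jmx 'e_j = Jsum.
Proof.
have expand (j : 'I_m) : Jmx (('e_j : V) *m invmx G) = \sum_k invmx G j k *: Jmx 'e_k.
  by rewrite dual_delta (lin_sum Jmx_lin).
transitivity (\sum_j \sum_k invmx G j k *: (Jmx 'e_k *m Jmx 'e_j)).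
  apply: eq_bigr => j _; rewrite expand mulmx_suml.
  by apply: eq_bigr => k _; rewrite scalemxAl.
rewrite exchange_big /=; apply: eq_bigr => j _; rewrite expand mulmx_sumr.
apply: eq_bigr => k _; rewrite -scalemxAr.
by rewrite -[in RHS](trmx_invG G_metric) mxE.
Qed.

Lemma ip_projz_dual j :
  ip (('e_j : V) *m projz) ('e_j *m invmx G *m projz) = projz j j.
Proof.
by rewrite -ip_projz_sym projz_idem (ip_dual G_metric) -(rowE j projz) mxE.
Qed.

Lemma Jsum_pseudoH : Jsum = \tr projz *: projv.
Proof.
apply: (@scalerI _ _ 2); first by rewrite pnatr_eq0.
rewrite scalerA scaler_nat mulr2n -{2}Jsum_swap /Jsum -big_split /=.
rewrite /mxtrace mulr_sumr scaler_suml; apply: eq_bigr => j _.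
by rewrite Jmx_anticomm ip_projz_dual.
Qed.

Definition ricci_pseudoH := (\tr projz / 2) *: projv - (\tr projv / 4) *: projz.

Lemma ricci_tensor_pseudoH y w : ricci_tensor br G y w = ip (y *m ricci_pseudoH) w.
Proof.
rewrite ricci_tensor_2step !mxtrace_admx_Kmx Jsum_pseudoH mxtrace_Jmx_Jmx.
rewrite mulmxBr -!scalemxAr ipBl !ipZl.
have sym_v : ip (w *m projv) y = ip (y *m projv) w.
  by rewrite ip_projv_sym (ipC G_metric).
have sym_z : ip (w *m projz) (y *m projz) = ip (y *m projz) w.
  by rewrite ip_projz_sym projz_idem (ipC G_metric).
rewrite sym_v sym_z; lra.
Qed.

Lemma ricci_op_pseudoH : ricci_op br G = ricci_pseudoH.
Proof.
rewrite /ricci_op.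
have -> : \matrix_(i, j) ricci_tensor br G (ev R i) (ev R j) = ricci_pseudoH *m G.
  apply/matrixP => i j; rewrite mxE ricci_tensor_pseudoH ip_delta -mulmxA -rowE.
  by rewrite [LHS]mxE.
by rewrite mulmxK //; case: G_metric.
Qed.

End TwoStep.

Theorem mainTheorem1 (R : realType) (m : nat)
    (br : 'rV[R]_m -> 'rV[R]_m -> 'rV[R]_m) (G : 'M[R]_m) :
  is_lie_bracket br ->
  two_step_nilpotent br ->
  pseudo_metric G ->
  center_nondegenerate br G ->
  pseudoH_type br G ->
  exists (c : R) (D : 'M[R]_m),
    is_derivation br D /\ ricci_op br G = c%:M + D.
Proof.
move=> br_lie br_2step G_metric center_nondeg pseudoH.
set a := \tr (projz br G) / 2; set b := \tr (projv br G) / 4.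
exists (2 * a + b), (- (a + b) *: (1%:M + projz br G)); split.
  exact: is_derivation_grading.
rewrite (ricci_op_pseudoH br_lie G_metric br_2step center_nondeg pseudoH).
by rewrite /ricci_pseudoH scale_projs_grading scaleNr.
Qed.
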